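(* Let $K$ be a $d$-dimensional convex body with $o\in\mathrm{int}(K)$ and let $0\le\varepsilon<1$. Let $\{v_i+\lambda_iK: i\in I\}$ be a family of positive homothets of $K$ such that $v_i\notin v_j+\lambda_j\,\mathrm{int}(K)$ for all distinct $i,j\in I$, and for all $i\in I$: $\lambda_i\ge1$, $(v_i+\lambda_iK)\cap(-\varepsilon K)\neq\emptyset$ and $o\notin v_i+\lambda_i\,\mathrm{int}(K)$. Then $|I|\le P\!\left(K,\frac{2}{1-\varepsilon}\right)$.
   Context: A convex body is a compact convex set with non-empty interior. For a convex body $L$ with $o\in\mathrm{int}(L)$, $\|x\|_L=\inf\{\mu>0:x\in\mu L\}$. $P(K,\lambda)$ is the maximum number of points $p_1,\dots,p_m$ such that $\max_{i<j}\|p_i-p_j\|_{\frac12(K-K)}\big/\min_{i<j}\|p_i-p_j\|_{K\cap-K}\le\lambda$. *)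

From HB Require Import structures.
From mathcomp Require Import all_boot all_order all_algebra.
From mathcomp Require Import all_classical all_reals all_analysis.
Set Implicit Arguments. Unset Strict Implicit. Unset Printing Implicit Defensive.
Import Order.TTheory GRing.Theory Num.Theory.
Import numFieldNormedType.Exports.
Local Open Scope classical_set_scope.
Local Open Scope ring_scope.

Section Defs.
Variables (R : realType) (d : nat).
Notation V := 'rV[R]_d.

Definition convexset (K : set V) : Prop :=
  forall x y (t : R), K x -> K y -> 0 <= t <= 1 -> K (t *: x + (1 - t) *: y).

Definition convex_body (K : set V) : Prop :=
  compact K /\ convexset K /\ (interior K !=set0).

Definition gauge (L : set V) (x : V) : R :=
  inf [set mu : R | 0 < mu /\ exists2 y, L y & x = mu *: y].

Definition half_diff (K : set V) : set V :=
  [set z | exists a b, [/\ K a, K b & z = 2^-1 *: (a - b)]].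

Definition sym_inter (K : set V) : set V := K `&` [set x | K (- x)].

(* There are m points p_1..p_m (pairwise distinct, so the minimum in the
   denominator is positive) with
   max_{i<j} ||p_i-p_j||_{(K-K)/2} / min_{i<j} ||p_i-p_j||_{K cap -K} <= lambda. *)
Definition P_attains (K : set V) (lambda : R) (m : nat) : Prop :=
  exists p : 'I_m -> V, injective p /\
    forall i j k l : 'I_m, (i < j)%N -> (k < l)%N ->
      gauge (half_diff K) (p i - p j) <= lambda * gauge (sym_inter K) (p k - p l).

Definition homothet (v : V) (lam : R) (A : set V) : set V :=
  [set x | exists2 y, A y & x = v + lam *: y].

End Defs.

From HB Require Import structures.
From mathcomp Require Import all_boot all_order all_algebra.
From mathcomp Require Import all_classical all_reals all_analysis.
From mathcomp Require Import ring lra.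
Set Implicit Arguments. Unset Strict Implicit. Unset Printing Implicit Defensive.
Import Order.TTheory GRing.Theory Num.Theory.
Import numFieldNormedType.Exports.
Local Open Scope classical_set_scope.
Local Open Scope ring_scope.

(** Put [p i := (lam i + eps)^-1 *: v i]. As [v i + lam i K] meets [-eps K],
  [- p i] is a convex combination of two points of [K], so [- p i \in K] and
  every [p i - p j] has gauge at most 2 for [(K - K)/2]. Conversely, if
  [p b - p a = mu z] with [z \in K], [lam b <= lam a] and [mu < 1/(1 + eps)],
  then [v b] is in [v a + lam a int K], against the packing condition; so the
  gauge of [p a - p b] for [K \cap -K] is at least [1/(1 + eps)]. The ratio is
  thus at most [2 (1 + eps) <= 2/(1 - eps)]. *)

Section Gauge.
Variables (R : realType) (d : nat) (L : set 'rV[R]_d).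

Lemma gauge_le (x y : 'rV[R]_d) (mu : R) :
  0 < mu -> L y -> x = mu *: y -> gauge L x <= mu.
Proof.
move=> mu_gt0 Ly ->; apply: ge_inf; first by exists 0 => m [/ltW].
by split=> //; exists y.
Qed.

Lemma ge_gauge (x : 'rV[R]_d) (c r : R) :
  0 < r -> (forall y, `|y| < r -> L y) ->
  (forall mu y, 0 < mu -> L y -> x = mu *: y -> c <= mu) -> c <= gauge L x.
Proof.
move=> r_gt0 ballL lb; apply: lb_le_inf => [|mu [mu_gt0 [y Ly xE]]]; last exact: lb xE.
have x1_gt0 : 0 < `|x| + 1 by rewrite ltr_pwDr.
pose mu := (`|x| + 1) / r.
have mu_gt0 : 0 < mu by rewrite divr_gt0.
exists mu; split=> //; exists (mu^-1 *: x); last first.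
  by rewrite scalerA mulfV ?gt_eqF // scale1r.
apply: ballL; rewrite normrZ ger0_norm ?invr_ge0 ?ltW // /mu invfM invrK.
by rewrite mulrAC gtr_pMl // mulrC ltr_pdivrMr // mul1r ltrDl.
Qed.

End Gauge.

Lemma interior0_norm_ball (R : realType) (d : nat) (K : set 'rV[R]_d) :
  interior K 0 -> exists2 r : R, 0 < r & forall y, `|y| < r -> K y.
Proof.
move=> /nbhs_ballP [r r_gt0 ballK]; exists r => // y y_lt; apply: ballK.
by rewrite -ball_normE /= sub0r normrN.
Qed.

Section ConvexInterior.
Variables (R : realType) (d : nat) (K : set 'rV[R]_d).
Hypothesis K_convex : convexset K.

Lemma convexset3 (a b c : 'rV[R]_d) (al be : R) :
  K a -> K b -> K c -> 0 <= al -> 0 <= be -> al + be <= 1 ->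
  K (al *: a + be *: b + (1 - al - be) *: c).
Proof.
move=> Ka Kb Kc al_ge0 be_ge0 albe_le1.
have [al1|al_neq1] := eqVneq al 1.
  have be0 : be = 0 by lra.
  rewrite al1 be0.
  by rewrite subrr sub0r oppr0 !scale0r !addr0 scale1r.
have al_lt1 : 0 < 1 - al by rewrite subr_gt0 lt_neqAle al_neq1; lra.
have -> : al *: a + be *: b + (1 - al - be) *: c =
    al *: a + (1 - al) *: ((be / (1 - al)) *: b + (1 - be / (1 - al)) *: c).
  apply/rowP => k; rewrite !mxE; field; exact: lt0r_neq0.
apply: K_convex => //; first apply: K_convex => //.
- by apply/andP; split; [apply: divr_ge0; lra | rewrite ler_pdivrMr // mul1r; lra].
- by apply/andP; split; lra.
Qed.

Hypothesis K0 : interior K 0.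

Lemma interior_convex2 (a b : 'rV[R]_d) (al be : R) :
  K a -> K b -> 0 <= al -> 0 <= be -> al + be < 1 ->
  interior K (al *: a + be *: b).
Proof.
move=> Ka Kb al_ge0 be_ge0 albe_lt1.
have [r r_gt0 ballK] := interior0_norm_ball K0.
have ga_gt0 : 0 < 1 - al - be by lra.
apply/nbhs_ballP; exists ((1 - al - be) * r); first exact: mulr_gt0.
move=> y; rewrite -ball_normE /= => y_near.
pose w := (1 - al - be)^-1 *: (y - (al *: a + be *: b)).
have Kw : K w.
  apply: ballK; rewrite /w normrZ ger0_norm ?invr_ge0 ?ltW //.
  by rewrite -normrN opprB ltr_pdivrMl // mulrC.
have -> : y = al *: a + be *: b + (1 - al - be) *: w.
  by rewrite /w scalerA mulfV ?gt_eqF // scale1r addrC subrK.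
apply: convexset3 => //; lra.
Qed.

End ConvexInterior.

Lemma gauge_half_diff_le2 (R : realType) (d : nat) (K : set 'rV[R]_d) (x y : 'rV[R]_d) :
  K x -> K y -> gauge (half_diff K) (x - y) <= 2.
Proof.
move=> Kx Ky; have -> : x - y = 2 *: (2^-1 *: (x - y)).
  by rewrite scalerA mulfV ?pnatr_eq0 // scale1r.
by apply: gauge_le => //; exists x, y.
Qed.

Lemma P_attains_card (R : realType) (d : nat) (K : set 'rV[R]_d) (lambda A B : R)
    (I : finType) (p : I -> 'rV[R]_d) :
  0 <= lambda -> injective p ->
  (forall i j, gauge (half_diff K) (p i - p j) <= A) ->
  (forall i j, i != j -> B <= gauge (sym_inter K) (p i - p j)) ->
  A <= lambda * B -> P_attains K lambda #|I|.
Proof.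
move=> lambda_ge0 p_inj upper lower AB.
exists (p \o enum_val); split; first exact: inj_comp p_inj enum_val_inj.
move=> i j k l _ kl; apply: le_trans (upper _ _) (le_trans AB _).
by rewrite ler_wpM2l // lower // (inj_eq enum_val_inj) -val_eqE neq_ltn kl.
Qed.

Section RescaledCentres.
Variables (R : realType) (d : nat) (K : set 'rV[R]_d) (eps : R).
Variables (I : eqType) (v : I -> 'rV[R]_d) (lam : I -> R).
Hypotheses (K_convex : convexset K) (K0 : interior K 0).
Hypotheses (eps_ge0 : 0 <= eps) (lam_ge1 : forall i, 1 <= lam i).

Definition rescaled_centre (i : I) : 'rV[R]_d := (lam i + eps)^-1 *: v i.

Lemma lam_eps_gt0 (i : I) : 0 < lam i + eps.
Proof. exact: ltr_wpDr eps_ge0 (lt_le_trans ltr01 (lam_ge1 i)). Qed.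

Lemma opp_rescaled_centre_in (i : I) :
  homothet (v i) (lam i) K `&` homothet 0 (- eps) K !=set0 -> K (- rescaled_centre i).
Proof.
move=> [_ [[y Ky ->] [z Kz yzE]]].
have li_ge1 := lam_ge1 i.
have -> : - rescaled_centre i =
    (lam i / (lam i + eps)) *: y + (1 - lam i / (lam i + eps)) *: z.
  have vE : v i = - eps *: z - lam i *: y by rewrite -[_ *: z]add0r -yzE addrK.
  rewrite /rescaled_centre vE; apply/rowP => k; rewrite !mxE.
  by field; rewrite gt_eqF // lam_eps_gt0.
have e_ge0 := eps_ge0; apply: K_convex => //; apply/andP; split.
  by apply: divr_ge0; lra.
by rewrite ler_pdivrMr ?lam_eps_gt0 //; lra.
Qed.

Hypothesis separated : forall i j, i != j -> ~ homothet (v j) (lam j) (interior K) (v i).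
Hypothesis meets_negK : forall i, homothet (v i) (lam i) K `&` homothet 0 (- eps) K !=set0.

Lemma rescaled_centres_apart (a b : I) (mu : R) (z : 'rV[R]_d) :
  a != b -> lam b <= lam a -> 0 < mu -> K z ->
  rescaled_centre b - rescaled_centre a = mu *: z -> (1 + eps)^-1 <= mu.
Proof.
move=> ab ba mu_gt0 Kz E; rewrite leNgt; apply/negP => mu_small.
have la_ge1 := lam_ge1 a; have lb_ge1 := lam_ge1 b; have e_ge0 := eps_ge0.
apply: (@separated b a); first by rewrite eq_sym.
pose al := (lam a - lam b) / lam a; pose be := (lam b + eps) * mu / lam a.
(* [v b = v a + lam a *: (al *: - p a + be *: z)], and [al + be < 1] because [mu < 1/(1 + eps)]. *)
exists (al *: (- rescaled_centre a) + be *: z).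
  apply: (interior_convex2 K_convex K0 (opp_rescaled_centre_in (meets_negK a)) Kz).
  - by rewrite /al divr_ge0; lra.
  - by rewrite /be !mulr_ge0 ?invr_ge0 ?(ltW mu_gt0) ?(ltW (lam_eps_gt0 b)); lra.
  have : (lam b + eps) * mu < lam b.
    apply: lt_le_trans (_ : (lam b + eps) / (1 + eps) <= _).
      by rewrite ltr_pM2l ?lam_eps_gt0.
    by rewrite ler_pdivrMr; nra.
  by rewrite /al /be -mulrDl ltr_pdivrMr ?mul1r; lra.
have -> : z = mu^-1 *: (rescaled_centre b - rescaled_centre a).
  by rewrite E scalerA mulVf ?gt_eqF // scale1r.
rewrite /al /be /rescaled_centre; apply/rowP => k; rewrite !mxE.
by field; rewrite ?gt_eqF //; lra.
Qed.

Lemma gauge_sym_rescaled_centres_ge (a b : I) :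
  a != b -> (1 + eps)^-1 <= gauge (sym_inter K) (rescaled_centre a - rescaled_centre b).
Proof.
move=> ab; have [r r_gt0 ballK] := interior0_norm_ball K0.
apply: (ge_gauge r_gt0) => [y y_lt|mu y mu_gt0 [Ky Kny] E].
  by split; apply: ballK; rewrite ?normrN.
have [ba|ab'] := leP (lam b) (lam a).
  by apply: (rescaled_centres_apart ab ba mu_gt0 Kny); rewrite scalerN -E opprB.
by apply: (rescaled_centres_apart _ (ltW ab') mu_gt0 Ky E); rewrite eq_sym.
Qed.

Lemma rescaled_centre_inj : injective rescaled_centre.
Proof.
move=> a b Eab; apply/eqP; apply: contraT => ab.
have := gauge_sym_rescaled_centres_ge ab; rewrite Eab subrr.
have e_ge0 := eps_ge0.
have half_gt0 : 0 < (1 + eps)^-1 / 2 by rewrite divr_gt0 // invr_gt0; lra.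
have Kin0 : K 0 := interior_subset K0.
have sym0 : sym_inter K 0 by split; rewrite /= ?oppr0.
have := gauge_le half_gt0 sym0 (esym (scaler0 _ _)); lra.
Qed.

End RescaledCentres.

Theorem lemma20 (R : realType) (d : nat) (K : set 'rV[R]_d) (eps : R)
  (I : finType) (v : I -> 'rV[R]_d) (lam : I -> R) :
  convex_body K -> interior K 0 ->
  0 <= eps -> eps < 1 ->
  (forall i j : I, i != j -> ~ homothet (v j) (lam j) (interior K) (v i)) ->
  (forall i : I, 1 <= lam i) ->
  (forall i : I, homothet (v i) (lam i) K `&` homothet 0 (- eps) K !=set0) ->
  (forall i : I, ~ homothet (v i) (lam i) (interior K) 0) ->
  exists m : nat, (#|I| <= m)%N /\ P_attains K (2 / (1 - eps)) m.
Proof.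
move=> [_ [K_convex _]] K0 eps_ge0 eps_lt1 separated lam_ge1 meets_negK _.
have opp_in i := opp_rescaled_centre_in K_convex eps_ge0 lam_ge1 (meets_negK i).
exists #|I|; split=> //.
apply: (P_attains_card (A := 2) (B := (1 + eps)^-1) _
  (rescaled_centre_inj K_convex K0 eps_ge0 lam_ge1 separated meets_negK)).
- by rewrite divr_ge0 //; lra.
- move=> i j; rewrite -[rescaled_centre _ _ _ i]opprK addrC.
  exact: gauge_half_diff_le2 (opp_in j) (opp_in i).
- exact: gauge_sym_rescaled_centres_ge K_convex K0 eps_ge0 lam_ge1 separated meets_negK.
rewrite -mulrA -invfM ler_pdivlMr; last by apply: mulr_gt0; lra.
nra.
Qed.
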